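(* Let $d>1$ be an integer, let $E,F$ be non-isogenous complex elliptic curves, and let $P\in E[d]$ and $Q\in F[d]$ be points of order exactly $d$. Assume that $E/\langle P\rangle$ is not isomorphic to $E$ or that $F/\langle Q\rangle$ is not isomorphic to $F$. Then the abelian surface $A=(E\times F)/\langle (P,Q)\rangle$, endowed with the polarisation of type $(1,d)$ descending from the product polarisation $\mathcal O_E(d\cdot 0)\boxtimes\mathcal O_F(d\cdot 0)$, is not isomorphic (as an abstract abelian variety) to its dual abelian surface $\hat A$.
   Context: $\hat A=\mathrm{Pic}^0(A)$ denotes the dual abelian variety. *)

From mathcomp Require Import all_boot all_algebra.
From mathcomp Require Import reals complex.
Set Implicit Arguments. Unset Strict Implicit. Unset Printing Implicit Defensive.
Import GRing.Theory Num.Theory.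
Local Open Scope ring_scope.

(* A complex torus of dimension g is C^g / L for a lattice L; complex elliptic
   curves are the tori C / L (dimension 1) and abelian surfaces are algebraic
   tori C^2 / L.  We work throughout with the lattices. *)

Definition reC {R : realType} (z : R[i]) : R := complex.Re z.
Definition imC {R : realType} (z : R[i]) : R := complex.Im z.

Definition is_integer {R : realType} (x : R) : Prop := exists k : int, x = k%:~R.

Definition lattice1 {R : realType} (w1 w2 : R[i]) : R[i] -> Prop :=
  fun z => exists a b : int, z = a%:~R * w1 + b%:~R * w2.

(* (w1, w2) is an R-basis of C, i.e. Z w1 + Z w2 is a lattice (full rank). *)
Definition lattice_basis {R : realType} (w1 w2 : R[i]) : Prop :=
  w1 != 0 /\ imC (w2 / w1) != 0.

(* Two elliptic curves C/L1, C/L2 are isogenous iff there is a nonzero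
   holomorphic homomorphism C/L1 -> C/L2, i.e. a nonzero a in C with a L1 ⊆ L2. *)
Definition isogenous1 {R : realType} (L1 L2 : R[i] -> Prop) : Prop :=
  exists a : R[i], a != 0 /\ forall z, L1 z -> L2 (a * z).

(* Isomorphism of the 1-dimensional tori C/L1 and C/L2:
   a in C^* with a L1 = L2. *)
Definition iso1 {R : realType} (L1 L2 : R[i] -> Prop) : Prop :=
  exists a : R[i], a != 0 /\ forall z, L2 z <-> exists y, L1 y /\ z = a * y.

(* p in C represents a point of C/L of order exactly d. *)
Definition has_order {R : realType} (L : R[i] -> Prop) (p : R[i]) (d : nat) : Prop :=
  L (d%:R * p) /\ forall k : nat, (0 < k < d)%N -> ~ L (k%:R * p).

(* The lattice L + Z p of the quotient elliptic curve (C/L)/<p>. *)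
Definition quot_lattice1 {R : realType} (L : R[i] -> Prop) (p : R[i]) : R[i] -> Prop :=
  fun z => exists y (k : int), L y /\ z = y + k%:~R * p.

Definition vec2 {R : realType} (x y : R[i]) : 'rV[R[i]]_2 :=
  \row_(j < 2) (if j == ord0 then x else y).

(* Lattice of A = (E x F)/<(P,Q)> with E = C/L1, F = C/L2 and P, Q represented
   by p, q: it is (L1 x L2) + Z (p, q) in C^2. *)
Definition quot_lattice2 {R : realType} (L1 L2 : R[i] -> Prop) (p q : R[i])
  : 'rV[R[i]]_2 -> Prop :=
  fun v => exists x y (k : int), L1 x /\ L2 y /\
      v = vec2 (x + k%:~R * p) (y + k%:~R * q).

(* The dual of V/L (V = C^2) is Vbar^* / L^, where
   Vbar^* is the space of C-antilinear forms V -> C and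
   L^ = { l | Im l(L) ⊆ Z }.  We identify Vbar^* C-linearly with C^2 via
   w |-> l_w, l_w(v) = w_1 conj(v_1) + w_2 conj(v_2). *)
Definition antilin_pair {R : realType} (w v : 'rV[R[i]]_2) : R[i] :=
  \sum_(j < 2) w 0 j * (v 0 j)^*.

Definition dual_lattice2 {R : realType} (L : 'rV[R[i]]_2 -> Prop)
  : 'rV[R[i]]_2 -> Prop :=
  fun w => forall v, L v -> is_integer (imC (antilin_pair w v)).

(* Isomorphism of complex tori C^2/L1 ≅ C^2/L2 (as complex Lie groups, hence,
   for abelian surfaces, as abelian varieties): an invertible C-linear map
   M of C^2 with M(L1) = L2. *)
Definition iso2 {R : realType} (L1 L2 : 'rV[R[i]]_2 -> Prop) : Prop :=
  exists M : 'M[R[i]]_2, M \in unitmx /\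
    forall v, L2 v <-> exists u, L1 u /\ v = u *m M.

(* An isomorphism A ≅ Â is an invertible C-linear map M of C^2 carrying the
   lattice L_A = (L_E × L_F) + Z (p, q) onto its dual.  Since p and q have the
   same order, L_A meets the coordinate axes in L_E × 0 and 0 × L_F, and M pairs
   these integrally; an off-diagonal entry of M would thus map L_E into a
   multiple of the dual of L_F, which is commensurable with L_F, i.e. give an
   isogeny E -> F.  So M is diagonal, and on the first axis it maps L_E onto the
   dual of the projection L_E + Z p of L_A.  But the dual of L + Z p, for p of
   order d, is (d / covol L) (L + Z p); hence L_E + Z p is homothetic to L_E,
   i.e. E/<P> ≅ E, and likewise F/<Q> ≅ F. *)

From mathcomp Require Import all_boot all_algebra.
From mathcomp Require Import reals complex.
From mathcomp Require Import intdiv zify ring.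
Import GRing.Theory Num.Theory.
Local Open Scope ring_scope.

Section ComplexComponents.
Context {R : realType}.
Implicit Types (x y : R[i]) (r : R).

Lemma conjE x : x^* = conjc x. Proof. by case: x. Qed.
Lemma cReD x y : complex.Re (x + y) = complex.Re x + complex.Re y. Proof. by case: x; case: y. Qed.
Lemma cImD x y : complex.Im (x + y) = complex.Im x + complex.Im y. Proof. by case: x; case: y. Qed.
Lemma cReN x : complex.Re (- x) = - complex.Re x. Proof. by case: x. Qed.
Lemma cImN x : complex.Im (- x) = - complex.Im x. Proof. by case: x. Qed.
Lemma cReM x y :
  complex.Re (x * y) = complex.Re x * complex.Re y - complex.Im x * complex.Im y.
Proof. by case: x; case: y. Qed.
Lemma cImM x y :
  complex.Im (x * y) = complex.Re x * complex.Im y + complex.Im x * complex.Re y.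
Proof. by case: x => a b; case: y => c e /=; ring. Qed.
Lemma cReJ x : complex.Re (conjc x) = complex.Re x. Proof. by case: x. Qed.
Lemma cImJ x : complex.Im (conjc x) = - complex.Im x. Proof. by case: x. Qed.
Lemma cRe_C r : complex.Re r%:C%C = r. Proof. by []. Qed.
Lemma cIm_C r : complex.Im r%:C%C = 0. Proof. by []. Qed.

Lemma intr_complex (k : int) : (k%:~R : R[i]) = (k%:~R : R)%:C%C.
Proof. by rewrite -(rmorph_int (real_complex R)). Qed.
Lemma natr_complex (n : nat) : (n%:R : R[i]) = (n%:R : R)%:C%C.
Proof. by rewrite -(rmorph_nat (real_complex R)). Qed.

Lemma complex_eq x y :
  complex.Re x = complex.Re y -> complex.Im x = complex.Im y -> x = y.
Proof. by case: x; case: y => /= ? ? ? ? -> ->. Qed.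

Lemma real_complex_eq0 r : (r%:C%C == 0 :> R[i]) = (r == 0).
Proof. by rewrite -(rmorph0 (real_complex R)) (inj_eq (@complexI R)). Qed.

End ComplexComponents.

Ltac complex_components :=
  rewrite /imC /reC ?conjE ?intr_complex ?natr_complex;
  rewrite ?(cReD, cImD, cReN, cImN, cReM, cImM, cReJ, cImJ, cRe_C, cIm_C).

Definition dual1 {R : realType} (L : R[i] -> Prop) : R[i] -> Prop :=
  fun w => forall z, L z -> is_integer (imC (w * z^*)).

Lemma dual1_ext {R : realType} {L L' : R[i] -> Prop} w :
  (forall z, L z <-> L' z) -> dual1 L w <-> dual1 L' w.
Proof. by move=> LL'; split=> w_dual z /LL'; apply: w_dual. Qed.

Definition covol {R : realType} (e1 e2 : R[i]) : R := imC (e1 * e2^*).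

Section Lattice.
Context {R : realType} {e1 e2 : R[i]}.
Local Notation L := (lattice1 e1 e2).
Local Notation covol := (covol e1 e2).

Lemma lattice1_lin (a b : int) {z w} : L z -> L w -> L (a%:~R * z + b%:~R * w).
Proof.
move=> [a1 [b1 ->]] [a2 [b2 ->]].
by exists (a * a1 + b * a2), (a * b1 + b * b2); rewrite !(intrD, intrM); ring.
Qed.

Lemma lattice1_e1 : L e1. Proof. by exists 1, 0; rewrite mul1r mul0r addr0. Qed.
Lemma lattice1_e2 : L e2. Proof. by exists 0, 1; rewrite mul1r mul0r add0r. Qed.
Lemma lattice1_0 : L 0. Proof. by exists 0, 0; rewrite !mul0r addr0. Qed.

Lemma lattice1D z w : L z -> L w -> L (z + w).
Proof. by move=> Lz Lw; have := lattice1_lin 1 1 Lz Lw; rewrite !mul1r. Qed.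

Lemma lattice1Mz (a : int) z : L z -> L (a%:~R * z).
Proof. by move=> Lz; have := lattice1_lin a 0 Lz Lz; rewrite mul0r addr0. Qed.

Lemma lattice1N z : L z -> L (- z).
Proof. by move=> /(lattice1Mz (-1)); rewrite mulN1r. Qed.

Lemma covol_neq0 : lattice_basis e1 e2 -> covol != 0.
Proof.
move=> [e1_neq0 r_nreal]; rewrite /covol -[e2](divfK e1_neq0).
move: r_nreal; set r := e2 / e1 => r_nreal.
have -> : imC (e1 * (r * e1)^*) = - imC r * (complex.Re e1 ^+ 2 + complex.Im e1 ^+ 2).
  by complex_components; ring.
rewrite mulf_eq0 negb_or oppr_eq0 r_nreal /= paddr_eq0 ?sqr_ge0 // !sqrf_eq0.
apply: contra e1_neq0 => /andP[/eqP Re0 /eqP Im0].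
by apply/eqP/complex_eq.
Qed.

(* Cramer's rule for the real basis (e1, e2) of C. *)
Lemma covol_mul w :
  covol%:C%C * w = (imC (w * e2^*))%:C%C * e1 - (imC (w * e1^*))%:C%C * e2.
Proof. by apply: complex_eq; rewrite /covol; complex_components; ring. Qed.

Lemma lattice1_covol_dual1 w :
  dual1 L w -> L (covol%:C%C * w).
Proof.
move=> w_dual; rewrite covol_mul.
have [s ->] := w_dual _ lattice1_e2.
have [t ->] := w_dual _ lattice1_e1.
by exists s, (- t); rewrite -!intr_complex intrN; ring.
Qed.

Lemma isogenous1_to_dual1 {L' : R[i] -> Prop} {c} :
  lattice_basis e1 e2 -> c != 0 ->
  (forall x, L' x -> dual1 L (c * x)) ->
  isogenous1 L' L.
Proof.
move=> e_basis c_neq0 cL'_dual; exists (covol%:C%C * c); split.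
  by rewrite mulf_neq0 // real_complex_eq0 covol_neq0.
by move=> x L'x; rewrite -mulrA; apply/lattice1_covol_dual1/cL'_dual.
Qed.

End Lattice.

Section Order.
Context {R : realType} {e1 e2 p : R[i]} {d : nat}.
Local Notation L := (lattice1 e1 e2).
Hypotheses (d_gt0 : (0 < d)%N) (p_order : has_order L p d).

Lemma has_order_dvd (k : int) : L (k%:~R * p) -> (d%:Z %| k)%Z.
Proof.
move=> Lkp; apply/dvdz_mod0P.
have dz_neq0 : d%:Z != 0 by rewrite eqz_nat -lt0n.
have : L ((k %% d%:Z)%Z%:~R * p).
  have -> : (k %% d%:Z)%Z%:~R * p = k%:~R * p + (- (k %/ d%:Z)%Z)%:~R * (d%:R * p).
    rewrite {2}(divz_eq k d%:Z) -[d%:R]/(d%:Z%:~R : R[i]) !(intrD, intrM, intrN).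
    ring.
  exact/lattice1D/lattice1Mz/p_order.1.
have := modz_ge0 k dz_neq0; have := ltz_mod k dz_neq0.
case: (k %% d%:Z)%Z => [[|r]|//] // r_lt_d _ Lrp.
by case: (p_order.2 r.+1).
Qed.

Lemma dvd_order_lattice1 (k : int) : (d%:Z %| k)%Z -> L (k%:~R * p).
Proof.
move=> /dvdzP[c ->]; rewrite intrM -[d%:Z%:~R]/(d%:R : R[i]) -mulrA.
exact/lattice1Mz/p_order.1.
Qed.

Lemma has_order_coprime {m n : int} : d%:R * p = m%:~R * e1 + n%:~R * e2 ->
  exists u v t : int, u * m + v * n + t * d%:Z = 1.
Proof.
move=> dp_eq; set g := gcdz (gcdz m n) d%:Z.
have g_eq1 : g = 1.
  have [c dc] := dvdzP (dvdz_gcdr (gcdz m n) d%:Z : (g %| d%:Z)%Z).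
  have [m' mm'] := dvdzP (dvdz_trans (dvdz_gcdl _ _) (dvdz_gcdl m n) : (g %| m)%Z).
  have [n' nn'] := dvdzP (dvdz_trans (dvdz_gcdl _ _) (dvdz_gcdr m n) : (g %| n)%Z).
  have g_gt0 : 0 < g.
    by rewrite lt0r /g gcdz_eq0 negb_and -[d%:Z == 0]/(d == 0)%N -lt0n d_gt0 orbT.
  have c_gt0 : 0 < c by move: dc g_gt0 d_gt0; rewrite -[d%:Z]/(Posz d); lia.
  (* (d / g) p = (m / g) e1 + (n / g) e2 lies in L, so d / g is not below d. *)
  have : ~~ (0 < c < d%:Z).
    case: c dc c_gt0 => // c dc _; rewrite !ltz_nat; apply/negP => /p_order.2; apply.
    exists m', n'; apply: (mulfI (_ : (g%:~R : R[i]) != 0)); first by rewrite intr_eq0 lt0r_neq0.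
    have := dp_eq; rewrite -[d%:R]/(d%:Z%:~R : R[i]) dc mm' nn' !intrM => gcp.
    by rewrite mulrDr !mulrA ![g%:~R * _]mulrC -gcp; ring.
  by move: dc g_gt0 c_gt0 d_gt0; rewrite -[d%:Z]/(Posz d); nia.
have [u1 [v1 e1_eq]] := Bezoutz (gcdz m n) d%:Z.
have [u2 [v2 e2_eq]] := Bezoutz m n.
by exists (u1 * u2), (u1 * v2), v1; rewrite -g_eq1 /g -e1_eq -e2_eq; ring.
Qed.

End Order.

Lemma has_order_transfer {R : realType} {e1 e2 f1 f2 p q : R[i]} {d : nat} :
  (0 < d)%N -> has_order (lattice1 e1 e2) p d -> has_order (lattice1 f1 f2) q d ->
  forall k : int, lattice1 f1 f2 (k%:~R * q) -> lattice1 e1 e2 (k%:~R * p).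
Proof.
move=> d_gt0 p_order q_order k /(has_order_dvd d_gt0 q_order).
exact: dvd_order_lattice1.
Qed.

Lemma pair_congr_mod_multiple {m n d a b c u v t : int} :
  u * m + v * n + t * d = 1 -> a * n - b * m = d * c ->
  exists A B k : int, a = d * A + k * m /\ b = d * B + k * n.
Proof.
move=> bezout cross; exists (v * c + a * t), (- (u * c) + b * t), (u * a + v * b).
split; apply/eqP; rewrite -subr_eq0.
- have -> : a - (d * (v * c + a * t) + (u * a + v * b) * m)
          = a * (1 - (u * m + v * n + t * d)) + v * ((a * n - b * m) - d * c) by ring.
  by rewrite bezout cross !subrr !mulr0 addr0.
- have -> : b - (d * (- (u * c) + b * t) + (u * a + v * b) * n)
          = b * (1 - (u * m + v * n + t * d)) - u * ((a * n - b * m) - d * c) by ring.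
  by rewrite bezout cross !subrr !mulr0 subr0.
Qed.

Section QuotientDual.
Context {R : realType} {e1 e2 p : R[i]} {d : nat}.
Local Notation L := (lattice1 e1 e2).
Local Notation L' := (quot_lattice1 (lattice1 e1 e2) p).
Hypotheses (d_gt0 : (0 < d)%N) (e_basis : lattice_basis e1 e2)
  (p_order : has_order L p d).

Let d_neq0 : (d%:R : R) != 0. Proof. by rewrite pnatr_eq0 -lt0n. Qed.
Let e_covol_neq0 : covol e1 e2 != 0. Proof. exact: covol_neq0. Qed.

Lemma order_point_expr {m n : int} : d%:R * p = m%:~R * e1 + n%:~R * e2 ->
  p = ((d%:R : R)^-1)%:C%C * (m%:~R * e1 + n%:~R * e2).
Proof. by move=> <-; rewrite mulrA natr_complex -rmorphM /= mulVf // mul1r. Qed.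

Lemma quot_lattice1_scale_dual1 z :
  L' z -> dual1 L' (((d%:R : R) / covol e1 e2)%:C%C * z).
Proof.
move=> [_ [k [[a [b ->]] ->]]] _ [_ [k' [[a' [b' ->]] ->]]].
have [[m [n /order_point_expr ->]] _] := p_order.
exists (d%:Z * (a * b' - b * a') + (a * k' * n + k * m * b' - b * k' * m - k * n * a')).
move: e_covol_neq0; rewrite /covol; complex_components => D_neq0.
by rewrite !(intrD, intrM, intrN, intrB); field; rewrite D_neq0 d_neq0.
Qed.

Lemma dual1_quot_lattice1_scale w :
  dual1 L' w -> L' ((covol e1 e2 / (d%:R : R))%:C%C * w).
Proof.
move=> w_dual.
have [a [b ab_eq]] : L ((covol e1 e2)%:C%C * w).
  by apply: lattice1_covol_dual1 => y Ly; apply: w_dual; exists y, 0; rewrite mul0r addr0.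
have [c c_eq] : is_integer (imC (w * p^*)).
  by apply: w_dual; exists 0, 1; rewrite add0r mul1r; split; first exact: lattice1_0.
have [[m [n dp_eq]] _] := p_order.
have [u [v [t bezout]]] := has_order_coprime d_gt0 p_order dp_eq.
have w_eq : w = ((covol e1 e2)^-1)%:C%C * (a%:~R * e1 + b%:~R * e2).
  by rewrite -ab_eq mulrA -rmorphM /= mulVf ?mul1r.
have cross : a * n - b * m = d%:Z * c.
  apply: (@intr_inj R); rewrite [in RHS]intrM -c_eq w_eq (order_point_expr dp_eq).
  move: e_covol_neq0; rewrite /covol; complex_components => D_neq0.
  by rewrite !(intrD, intrM, intrN, intrB); field; rewrite D_neq0 d_neq0.
have [A [B [k [a_eq b_eq]]]] := pair_congr_mod_multiple bezout cross.
exists (A%:~R * e1 + B%:~R * e2), k; split; first by exists A, B.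
rewrite w_eq mulrA -rmorphM /= mulrAC divff // mul1r a_eq b_eq (order_point_expr dp_eq).
apply: complex_eq; complex_components; rewrite !(intrD, intrM).
all: by field.
Qed.

(* Since dual1 L' = (d / covol) L', a lattice similar to the dual of L' is similar to L'. *)
Lemma iso1_quot_lattice1_of_dual1 {a : R[i]} : a != 0 ->
  (forall w, dual1 L' w <-> exists y, L y /\ w = a * y) -> iso1 L' L.
Proof.
move=> a_neq0 dual_eq.
set s := ((d%:R : R) / covol e1 e2)%:C%C; set s' := (covol e1 e2 / (d%:R : R))%:C%C.
have ss' : s' * s = 1 by rewrite -rmorphM /= mulrA divfK // divff.
have s_neq0 : s != 0 by apply: contra_eq_neq ss' => ->; rewrite mulr0 eq_sym oner_neq0.
exists (s / a); split=> [|z]; first by rewrite mulf_neq0 ?invr_eq0.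
split=> [Lz | [y [L'y ->]]].
- exists (s' * (a * z)); split; first by apply/dual1_quot_lattice1_scale/dual_eq; exists z.
  have -> : s / a * (s' * (a * z)) = s' * s * (a / a) * z by ring.
  by rewrite ss' divff // !mul1r.
- have [y' [Ly' sy_eq]] := (dual_eq _).1 (quot_lattice1_scale_dual1 _ L'y).
  by rewrite mulrAC sy_eq mulrAC divff // mul1r.
Qed.

End QuotientDual.

Definition slice2 {R : realType} (j : 'I_2) (L : 'rV[R[i]]_2 -> Prop) : R[i] -> Prop :=
  fun x => L (x *: 'e_j).

Definition proj2 {R : realType} (j : 'I_2) (L : 'rV[R[i]]_2 -> Prop) : R[i] -> Prop :=
  fun x => exists v, L v /\ x = v 0 j.

Section Pairing.
Context {R : realType}.
Implicit Types (x y : R[i]) (v w : 'rV[R[i]]_2).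

Lemma antilin_pair_scale_deltal x j v : antilin_pair (x *: 'e_j) v = x * (v 0 j)^*.
Proof.
rewrite /antilin_pair (bigD1 j) //= big1 => [|k /negbTE kj]; last by rewrite !mxE kj mulr0 mul0r.
by rewrite !mxE !eqxx mulr1 addr0.
Qed.

Lemma antilin_pair_scale_deltar w y j : antilin_pair w (y *: 'e_j) = w 0 j * y^*.
Proof.
rewrite /antilin_pair (bigD1 j) //= big1 => [|k /negbTE kj].
  by rewrite !mxE !eqxx mulr1 addr0.
by rewrite !mxE eqxx kj mulr0 conjC0 mulr0.
Qed.

Lemma slice2_dual_lattice2 (L : 'rV[R[i]]_2 -> Prop) j x :
  slice2 j (dual_lattice2 L) x <-> dual1 (proj2 j L) x.
Proof.
split=> [x_dual _ [v [Lv ->]] | x_dual v Lv].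
  by have := x_dual v Lv; rewrite antilin_pair_scale_deltal.
by rewrite antilin_pair_scale_deltal; apply: x_dual; exists v.
Qed.

End Pairing.

Section IsoDual.
Context {R : realType} {L : 'rV[R[i]]_2 -> Prop} {M : 'M[R[i]]_2}.
Hypothesis M_iso : forall v, dual_lattice2 L v <-> exists u, L u /\ v = u *m M.

Lemma iso_dual_slice_pairing {i j x y} :
  slice2 i L x -> slice2 j L y -> is_integer (imC (x * M i j * y^*)).
Proof.
move=> Lx Ly; have := (M_iso _).2 (ex_intro _ _ (conj Lx erefl)) _ Ly.
by rewrite antilin_pair_scale_deltar -scalemxAl -rowE !mxE.
Qed.

Lemma iso_dual_is_diag {L1 : R[i] -> Prop} {f1 f2 : R[i]} :
  lattice_basis f1 f2 -> ~ isogenous1 L1 (lattice1 f1 f2) ->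
  (forall x, L1 x -> slice2 0 L x) -> (forall y, lattice1 f1 f2 y -> slice2 1 L y) ->
  is_diag_mx M.
Proof.
move=> f_basis not_isog L1_slice Lf_slice.
have M01 : M 0 1 = 0.
  have [//|M01_neq0] := eqVneq (M 0 1) 0; case: not_isog.
  apply: (isogenous1_to_dual1 f_basis M01_neq0) => x L1x y Lfy.
  by rewrite [M 0 1 * x]mulrC; apply: iso_dual_slice_pairing; [apply: L1_slice | apply: Lf_slice].
have M10 : M 1 0 = 0.
  have [//|M10_neq0] := eqVneq (M 1 0) 0; case: not_isog.
  apply: (isogenous1_to_dual1 f_basis (_ : (M 1 0)^* != 0)); first by rewrite conjC_eq0.
  move=> x L1x y Lfy; have [k k_eq] := iso_dual_slice_pairing (Lf_slice _ Lfy) (L1_slice _ L1x).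
  by exists (- k); rewrite intrN -k_eq; complex_components; ring.
have ord2 (i : 'I_2) : i = 0 \/ i = 1.
  by case: i => [[|[|//]]] ?; [left | right]; apply: val_inj.
by apply/is_diag_mxP => i j; case: (ord2 i) (ord2 j) => -> [] ->.
Qed.

End IsoDual.

Lemma diag_unitmx_neq0 {F : fieldType} {n : nat} (dd : 'rV[F]_n) j :
  diag_mx dd \in unitmx -> dd 0 j != 0.
Proof.
rewrite unitmxE det_diag unitfE; apply: contraNneq => dj0.
by apply/prodf_eq0; exists j; rewrite ?dj0.
Qed.

Lemma scale_delta_mul_diag {R : pzRingType} {n : nat} (dd : 'rV[R]_n) (y : R) j :
  (y *: 'e_j) *m diag_mx dd = (y * dd 0 j) *: 'e_j :> 'rV_n.
Proof. by rewrite -scalemxAl -rowE row_diag_mx scalerA. Qed.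

Section IsoDualDiag.
Context {R : realType} {L : 'rV[R[i]]_2 -> Prop} {dd : 'rV[R[i]]_2}.
Hypotheses (dd_unit : diag_mx dd \in unitmx)
  (dd_iso : forall v, dual_lattice2 L v <-> exists u, L u /\ v = u *m diag_mx dd).

Lemma iso_dual_diag_slice j w :
  dual1 (proj2 j L) w <-> exists y, slice2 j L y /\ w = dd 0 j * y.
Proof.
have dj_neq0 := diag_unitmx_neq0 dd j dd_unit.
rewrite -slice2_dual_lattice2; split=> [/dd_iso[u [Lu w_eq]] | [y [Ly ->]]].
  exists (w / dd 0 j); split; last by rewrite mulrC divfK.
  rewrite /slice2 (_ : (w / dd 0 j) *: _ = u) //.
  apply: (row_free_inj (_ : row_free (diag_mx dd))); first by rewrite row_free_unit.
  by rewrite /= scale_delta_mul_diag divfK.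
by apply/dd_iso; exists (y *: 'e_j); rewrite scale_delta_mul_diag mulrC.
Qed.

End IsoDualDiag.

Section QuotientSurface.
Context {R : realType} {e1 e2 f1 f2 p q : R[i]}.
Local Notation LE := (lattice1 e1 e2).
Local Notation LF := (lattice1 f1 f2).
Local Notation LA := (quot_lattice2 (lattice1 e1 e2) (lattice1 f1 f2) p q).

Lemma scale_delta0_vec2 (x : R[i]) : x *: 'e_0 = vec2 x 0.
Proof. by apply/rowP => -[[|[|//]] ?]; rewrite !mxE /= ?mulr1 ?mulr0. Qed.

Lemma scale_delta1_vec2 (y : R[i]) : y *: 'e_1 = vec2 0 y.
Proof. by apply/rowP => -[[|[|//]] ?]; rewrite !mxE /= ?mulr1 ?mulr0. Qed.

Lemma vec2_inj (x y x' y' : R[i]) : vec2 x y = vec2 x' y' -> x = x' /\ y = y'.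
Proof.
move=> eq_v; split.
  by have := congr1 (fun v : 'rV_2 => v 0 0) eq_v; rewrite !mxE.
by have := congr1 (fun v : 'rV_2 => v 0 1) eq_v; rewrite !mxE.
Qed.

Lemma slice2_quot_lattice2_0 :
  (forall k : int, LF (k%:~R * q) -> LE (k%:~R * p)) ->
  forall x, slice2 0 LA x <-> LE x.
Proof.
move=> kq_kp x; rewrite /slice2 scale_delta0_vec2; split.
  move=> [x' [y [k [LEx' [LFy /vec2_inj[-> yk_eq]]]]]].
  have kq_eq : k%:~R * q = - y by apply/eqP; rewrite -addr_eq0 addrC -yk_eq.
  by apply: lattice1D => //; apply: kq_kp; rewrite kq_eq; apply: lattice1N.
by move=> LEx; exists x, 0, 0; rewrite !mul0r !addr0; do !split=> //; exact: lattice1_0.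
Qed.

Lemma slice2_quot_lattice2_1 :
  (forall k : int, LE (k%:~R * p) -> LF (k%:~R * q)) ->
  forall y, slice2 1 LA y <-> LF y.
Proof.
move=> kp_kq y; rewrite /slice2 scale_delta1_vec2; split.
  move=> [x [y' [k [LEx [LFy' /vec2_inj[xk_eq ->]]]]]].
  have kp_eq : k%:~R * p = - x by apply/eqP; rewrite -addr_eq0 addrC -xk_eq.
  by apply: lattice1D => //; apply: kp_kq; rewrite kp_eq; apply: lattice1N.
by move=> LFy; exists 0, y, 0; rewrite !mul0r !addr0; do !split=> //; exact: lattice1_0.
Qed.

Lemma proj2_quot_lattice2_0 x : proj2 0 LA x <-> quot_lattice1 LE p x.
Proof.
split=> [[_ [[x' [y [k [LEx' [_ ->]]]]] ->]] | [x' [k [LEx' ->]]]].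
  by exists x', k; rewrite mxE.
exists (vec2 (x' + k%:~R * p) (0 + k%:~R * q)); rewrite mxE; split=> //.
by exists x', 0, k; do !split=> //; exact: lattice1_0.
Qed.

Lemma proj2_quot_lattice2_1 y : proj2 1 LA y <-> quot_lattice1 LF q y.
Proof.
split=> [[_ [[x [y' [k [_ [LFy' ->]]]]] ->]] | [y' [k [LFy' ->]]]].
  by exists y', k; rewrite mxE.
exists (vec2 (0 + k%:~R * p) (y' + k%:~R * q)); rewrite mxE; split=> //.
by exists 0, y', k; do !split=> //; exact: lattice1_0.
Qed.

End QuotientSurface.

Lemma iso1_quot_of_iso_dual_diag {R : realType} {L : 'rV[R[i]]_2 -> Prop} {dd : 'rV[R[i]]_2}
    {e1 e2 p : R[i]} {d : nat} (j : 'I_2) :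
  (0 < d)%N -> lattice_basis e1 e2 -> has_order (lattice1 e1 e2) p d ->
  diag_mx dd \in unitmx ->
  (forall v, dual_lattice2 L v <-> exists u, L u /\ v = u *m diag_mx dd) ->
  (forall x, slice2 j L x <-> lattice1 e1 e2 x) ->
  (forall x, proj2 j L x <-> quot_lattice1 (lattice1 e1 e2) p x) ->
  iso1 (quot_lattice1 (lattice1 e1 e2) p) (lattice1 e1 e2).
Proof.
move=> d_gt0 e_basis p_order dd_unit dd_iso slice_eq proj_eq.
apply: (iso1_quot_lattice1_of_dual1 d_gt0 e_basis p_order (diag_unitmx_neq0 dd j dd_unit)).
move=> w; rewrite -(dual1_ext w proj_eq) (iso_dual_diag_slice dd_unit dd_iso).
by split=> -[y [Ly ->]]; exists y; split=> //; apply/slice_eq.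
Qed.

Theorem theorem2p5 (R : realType) (d : nat) (e1 e2 f1 f2 p q : R[i]) :
  (1 < d)%N ->
  lattice_basis e1 e2 -> lattice_basis f1 f2 ->
  ~ isogenous1 (lattice1 e1 e2) (lattice1 f1 f2) ->
  has_order (lattice1 e1 e2) p d ->
  has_order (lattice1 f1 f2) q d ->
  (~ iso1 (quot_lattice1 (lattice1 e1 e2) p) (lattice1 e1 e2) \/
   ~ iso1 (quot_lattice1 (lattice1 f1 f2) q) (lattice1 f1 f2)) ->
  let LA := quot_lattice2 (lattice1 e1 e2) (lattice1 f1 f2) p q in
  ~ iso2 LA (dual_lattice2 LA).
Proof.
move=> d_gt1 e_basis f_basis not_isog p_order q_order not_iso LA [M [M_unit M_iso]].
have d_gt0 : (0 < d)%N := ltnW d_gt1.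
have kq_kp := has_order_transfer d_gt0 p_order q_order.
have kp_kq := has_order_transfer d_gt0 q_order p_order.
have /diag_mxP[dd M_eq] : is_diag_mx M.
  apply: (iso_dual_is_diag M_iso f_basis not_isog) => [x | y] Lxy.
    exact/(slice2_quot_lattice2_0 kq_kp).
  exact/(slice2_quot_lattice2_1 kp_kq).
rewrite {}M_eq in M_unit M_iso.
case: not_iso => not_iso; apply: not_iso.
- apply: (iso1_quot_of_iso_dual_diag 0 d_gt0 e_basis p_order M_unit M_iso).
    exact: slice2_quot_lattice2_0.
  exact: proj2_quot_lattice2_0.
- apply: (iso1_quot_of_iso_dual_diag 1 d_gt0 f_basis q_order M_unit M_iso).
    exact: slice2_quot_lattice2_1.
  exact: proj2_quot_lattice2_1.
Qed.
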